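(* Let $s\in\mathbb{R}$ and let $f:\mathbb{R}^n\to(-\infty,\infty]$ be lsc and variationally $s$-convex at $\bar x\in\operatorname{dom}f$ for $\bar x^*\in\partial f(\bar x)$. Then for every $t\in\mathbb{R}$ and every $y^*\in\mathbb{R}^n$ the function $\psi:=f+\langle y^*,\cdot-\bar x\rangle+\frac t2\|\cdot-\bar x\|^2$ is variationally $(s+t)$-convex at $\bar x$ for $\bar x^*+y^*$. Moreover, if $\widehat f$, $U$, $V$, $\rho$ are an lsc function, open convex neighborhood and number certifying variational $s$-convexity of $f$ at $\bar x$ for $\bar x^*$ (as in the definition), then variational $(s+t)$-convexity of $\psi$ at $\bar x$ for $\bar x^*+y^*$ can be certified by the function $\widehat\psi:=\widehat f+\langle y^*,\cdot-\bar x\rangle+\frac t2\|\cdot-\bar x\|^2$ together with a suitable open convex neighborhood $\widehat U\times\widehat V$ of $(\bar x,\bar x^*+y^* )$ and some $\widehat\rho>\psi(\bar x)=f(\bar x)$.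
   Context: Limiting subdifferential $\partial f(x)$: all $x^*$ with $x_k\to x$, $f(x_k)\to f(x)$, $x_k^*\to x^*$, $x_k^*\in\widehat\partial f(x_k)$, where $\widehat\partial f(x)=\{x^*\mid\liminf_{y\to x}\frac{f(y)-f(x)-\langle x^*,y-x\rangle}{\|y-x\|}\ge0\}$. $\operatorname{gph}_\rho\partial f=\{(x,x^* )\in\operatorname{gph}\partial f\mid f(x)<\rho\}$. An lsc function $f$ is variationally $s$-convex at $\bar x\in\operatorname{dom}f$ for $\bar x^*\in\partial f(\bar x)$ if there exist an open convex neighborhood $U\times V$ of $(\bar x,\bar x^* )$, an lsc function $\widehat f$ and $\rho>f(\bar x)$ such that $\widehat f-\frac s2\|\cdot\|^2$ is convex on $U$, $\widehat f\le f$ on $U$, $\operatorname{gph}_\rho\partial f\cap(U\times V)=\operatorname{gph}\partial\widehat f\cap(U\times V)$ and $f(x)=\widehat f(x)$ at the common elements $(x,x^* )$; such $\widehat f,U,V,\rho$ are said to certify the property. *)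

(* R^n is modelled by row vectors 'rV[R]_n
   over an arbitrary R : realType; extended values (-oo,+oo] by \bar R. *)
From HB Require Import structures.
From mathcomp Require Import all_boot all_order all_algebra.
From mathcomp Require Import all_classical all_reals all_analysis.
Set Implicit Arguments. Unset Strict Implicit. Unset Printing Implicit Defensive.
Import Order.TTheory GRing.Theory Num.Theory.
Import numFieldNormedType.Exports.
Local Open Scope classical_set_scope.
Local Open Scope ring_scope.

Section Defs.
Variables (R : realType) (n : nat).
Local Notation V := 'rV[R]_n.

Definition dotv (u v : V) : R := \sum_(i < n) u ord0 i * v ord0 i.
Definition enorm (u : V) : R := Num.sqrt (dotv u u).

Definition ext_fun (f : V -> \bar R) := forall x, f x != -oo%E.

Definition lsc (f : V -> \bar R) :=
  forall x (a : R), (a%:E < f x)%E ->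
    exists2 d : R, 0 < d & forall y, enorm (y - x) < d -> (a%:E < f y)%E.

(* Frechet (regular) subdifferential: f x finite and
   liminf_{y -> x} (f y - f x - <x*, y - x>) / ||y - x|| >= 0 *)
Definition frechet_subdiff (f : V -> \bar R) (x xs : V) :=
  f x \is a fin_num /\
  forall e : R, 0 < e -> exists2 d : R, 0 < d & forall y,
    0 < enorm (y - x) < d ->
    ((fine (f x) + dotv xs (y - x) - e * enorm (y - x))%:E <= f y)%E.

Definition lim_subdiff (f : V -> \bar R) (x xs : V) :=
  exists (xk xks : nat -> V),
    [/\ xk @ \oo --> x, (fun k => f (xk k)) @ \oo --> f x,
        xks @ \oo --> xs & forall k, frechet_subdiff f (xk k) (xks k)].

Definition convex_setv (U : set V) :=
  forall x y (l : R), U x -> U y -> 0 <= l <= 1 -> U (l *: x + (1 - l) *: y).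

Definition convex_on (U : set V) (g : V -> \bar R) :=
  forall x y (l : R), U x -> U y -> 0 < l < 1 ->
    let z := l *: x + (1 - l) *: y in
    (g z <= l%:E * g x + (1 - l)%:E * g y)%E.

Definition certifies (f : V -> \bar R) (s : R) (xb xbs : V)
    (fh : V -> \bar R) (U W : set V) (rho : R) :=
  [/\ open U /\ convex_setv U /\ U xb,
      open W /\ convex_setv W /\ W xbs,
      ext_fun fh /\ lsc fh,
      (f xb < rho%:E)%E &
      [/\ convex_on U (fun x => fh x - (s / 2 * enorm x ^+ 2)%:E)%E,
      (forall x, U x -> (fh x <= f x)%E),
      (forall x xs, U x -> W xs ->
         (lim_subdiff f x xs /\ (f x < rho%:E)%E) <-> lim_subdiff fh x xs) &
      (forall x xs, U x -> W xs -> lim_subdiff f x xs -> (f x < rho%:E)%E ->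
         lim_subdiff fh x xs -> f x = fh x)]].

Definition var_convex (f : V -> \bar R) (s : R) (xb xbs : V) :=
  [/\ (f xb < +oo)%E, lim_subdiff f xb xbs &
      exists fh U W rho, certifies f s xb xbs fh U W rho].

Definition tilt (g : V -> \bar R) (ys xb : V) (t : R) : V -> \bar R :=
  fun x => (g x + (dotv ys (x - xb) + t / 2 * enorm (x - xb) ^+ 2)%:E)%E.

End Defs.

From HB Require Import structures.
From mathcomp Require Import all_boot all_order all_algebra.
From mathcomp Require Import all_classical all_reals all_analysis.
From mathcomp Require Import ring lra.
Import Order.TTheory GRing.Theory Num.Theory.
Import numFieldNormedType.Exports.
Local Open Scope classical_set_scope.
Local Open Scope ring_scope.

(* Adding q := <ys, . - xb> + t/2 ||. - xb||^2 shifts every Frechet, hence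
   every limiting, subgradient at x by the gradient ys + t (x - xb) of q,
   preserves lower semicontinuity, and (fh + q) - (s+t)/2 ||.||^2 differs from
   the convex function fh - s/2 ||.||^2 by an affine function.
   So fh + q certifies f + q on small balls around (xb, xbs + ys), at any level
   rhoh strictly between f xb and rho: near that point the shifted subgradients
   stay in W, q is too small for f + q < rhoh to break f < rho, and the
   (s+t)-strong subgradient inequality of fh + q, taken at xb, keeps fh + q
   below rhoh on its subdifferential graph. *)

Section InnerProduct.
Context {R : realType} {n : nat}.
Local Notation V := 'rV[R]_n.
Implicit Types (u v w : V) (a : R).

Lemma dotvC u v : dotv u v = dotv v u.
Proof. by apply: eq_bigr => i _; rewrite mulrC. Qed.

Lemma dotvDl u v w : dotv (u + v) w = dotv u w + dotv v w.
Proof. by rewrite /dotv -big_split; apply: eq_bigr => i _; rewrite !mxE mulrDl. Qed.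

Lemma dotvDr u v w : dotv w (u + v) = dotv w u + dotv w v.
Proof. by rewrite dotvC dotvDl !(dotvC w). Qed.

Lemma dotvZl a u v : dotv (a *: u) v = a * dotv u v.
Proof. by rewrite /dotv mulr_sumr; apply: eq_bigr => i _; rewrite !mxE mulrA. Qed.

Lemma dotvZr a u v : dotv v (a *: u) = a * dotv v u.
Proof. by rewrite dotvC dotvZl dotvC. Qed.

Lemma dotvNl u v : dotv (- u) v = - dotv u v.
Proof. by rewrite -scaleN1r dotvZl mulN1r. Qed.

Lemma dotvNr u v : dotv v (- u) = - dotv v u.
Proof. by rewrite dotvC dotvNl dotvC. Qed.

Lemma dotvBl u v w : dotv (u - v) w = dotv u w - dotv v w.
Proof. by rewrite dotvDl dotvNl. Qed.

Lemma dotvBr u v w : dotv w (u - v) = dotv w u - dotv w v.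
Proof. by rewrite dotvDr dotvNr. Qed.

Lemma dotv0l v : dotv 0 v = 0.
Proof. by rewrite -(scale0r (0 : V)) dotvZl mul0r. Qed.

Lemma dotv0r v : dotv v 0 = 0.
Proof. by rewrite dotvC dotv0l. Qed.

Lemma dotvv_ge0 v : 0 <= dotv v v.
Proof. by apply: sumr_ge0 => i _; rewrite -expr2 sqr_ge0. Qed.

Lemma enorm_sq v : enorm v ^+ 2 = dotv v v.
Proof. by rewrite sqr_sqrtr // dotvv_ge0. Qed.

Lemma enorm_ge0 v : 0 <= enorm v.
Proof. exact: sqrtr_ge0. Qed.

Lemma enormZ a v : enorm (a *: v) = `|a| * enorm v.
Proof. by rewrite /enorm dotvZl dotvZr mulrA -expr2 sqrtrM ?sqr_ge0 // sqrtr_sqr. Qed.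

Lemma normr_le_enorm v : `|v| <= enorm v.
Proof.
rewrite [leLHS]/Num.Def.normr /= mx_normrE.
apply: bigmax_le => [|[i j] _ /=]; first exact: enorm_ge0.
rewrite (ord1 i) /enorm -sqrtr_sqr ler_sqrt ?dotvv_ge0 // /dotv (bigD1 j) //=.
by rewrite -expr2 lerDl sumr_ge0 // => k _; rewrite -expr2 sqr_ge0.
Qed.

Lemma enorm_eq0 v : enorm v = 0 -> v = 0.
Proof. by move=> v0; apply/normr0_eq0/le_anti; rewrite normr_ge0 -v0 normr_le_enorm. Qed.

Lemma nbhs_enorm_ball (P : V -> Prop) (x : V) :
  (\forall y \near x, P y) -> exists2 d : R, 0 < d & forall y, enorm (y - x) < d -> P y.
Proof.
move=> /nbhs_ballP[d d_gt0 Pd]; exists d => // y yd; apply: Pd.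
by rewrite -ball_normE /= distrC (le_lt_trans (normr_le_enorm _) yd).
Qed.

Lemma row_entry_cvg {T} {F : set_system T} {FF : Filter F} {f : T -> V} {v : V} i :
  f @ F --> v -> (fun k => f k ord0 i) @ F --> v ord0 i.
Proof. by move=> fv; apply: (cvg_comp f (fun M : V => M ord0 i) fv); exact: coord_continuous. Qed.

Lemma dotv_cvg {T} {F : set_system T} {FF : Filter F} {f g : T -> V} {u v : V} :
  f @ F --> u -> g @ F --> v -> (fun k => dotv (f k) (g k)) @ F --> dotv u v.
Proof.
move=> fu gv; apply: cvg_big => [|i _]; first exact: add_continuous.
by apply: cvgM; exact: row_entry_cvg.
Qed.

End InnerProduct.

Section Tilt.
Context {R : realType} {n : nat}.
Local Notation V := 'rV[R]_n.
Implicit Types (g : V -> \bar R) (ys c x y xs : V) (t : R).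

Definition tilt_quad ys c t x : R := dotv ys (x - c) + t / 2 * enorm (x - c) ^+ 2.

Lemma tiltE g ys c t x : tilt g ys c t x = (g x + (tilt_quad ys c t x)%:E)%E.
Proof. by []. Qed.

Lemma tilt_quad_center ys c t : tilt_quad ys c t c = 0.
Proof. by rewrite /tilt_quad enorm_sq subrr dotv0r dotv0l mulr0 addr0. Qed.

Lemma tilt_center g ys c t : tilt g ys c t c = g c.
Proof. by rewrite tiltE tilt_quad_center adde0. Qed.

Lemma tilt_quad_expand ys c t x y :
  tilt_quad ys c t y = tilt_quad ys c t x + dotv (ys + t *: (x - c)) (y - x)
                       + t / 2 * enorm (y - x) ^+ 2.
Proof.
rewrite /tilt_quad !enorm_sq.
have -> : y - c = (x - c) + (y - x) by rewrite [RHS]addrC addrA subrK.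
move: (x - c) (y - x) => a h.
by rewrite !dotvDr !dotvDl dotvZl (dotvC h a); field.
Qed.

Lemma tilt_quad_continuous ys c t : continuous (tilt_quad ys c t).
Proof.
have -> : tilt_quad ys c t = fun y => dotv ys (y - c) + t / 2 * dotv (y - c) (y - c).
  by apply/funext => y; rewrite /tilt_quad enorm_sq.
move=> x.
have xc : (fun y => y - c) @ x --> x - c by exact: (cvgB cvg_id (cvg_cst _)).
exact: (cvgD (dotv_cvg (cvg_cst ys) xc) (cvgM (cvg_cst _) (dotv_cvg xc xc))).
Qed.

Lemma tiltK g ys c t : tilt (tilt g ys c t) (- ys) c (- t) = g.
Proof.
apply/funext => y; rewrite !tiltE -addeA -EFinD /tilt_quad dotvNl.
by rewrite !mulNr addrACA !subrr addr0 adde0.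
Qed.

Lemma tilt_ltE g ys c t x (r : R) :
  (tilt g ys c t x < r%:E)%E = (g x < (r - tilt_quad ys c t x)%:E)%E.
Proof. by rewrite tiltE EFinB lteBrDr. Qed.

Lemma ext_fun_tilt {g} ys c t : ext_fun g -> ext_fun (tilt g ys c t).
Proof. by move=> g_ext x; rewrite tiltE; move: (g_ext x); case: (g x). Qed.

Lemma lsc_tilt {g} ys c t : lsc g -> lsc (tilt g ys c t).
Proof.
move=> g_lsc x a; rewrite tiltE; set q := tilt_quad ys c t => a_lt.
have [eta eta_gt0 gx_gt] : exists2 eta : R, 0 < eta & ((a - q x + eta)%:E < g x)%E.
  case: (g x) a_lt => [r| |] //= a_lt; last by exists 1; rewrite ?ltey.
  rewrite -EFinD lte_fin in a_lt.
  by exists ((r + q x - a) / 2); rewrite ?lte_fin; lra.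
have [d1 d1_gt0 g_gt] := g_lsc x _ gx_gt.
have [d2 d2_gt0 q_gt] : exists2 d : R, 0 < d &
    forall y, enorm (y - x) < d -> q x - eta < q y.
  by apply: nbhs_enorm_ball; apply: (cvgr_gt _ (tilt_quad_continuous ys c t x)); rewrite ltrBlDr ltrDl.
exists (Num.min d1 d2) => [|y]; first by rewrite lt_min d1_gt0.
rewrite lt_min tiltE -/q => /andP[/g_gt gy_gt /q_gt qy_gt].
case: (g y) gy_gt => [r| |] //= gy_gt; last by rewrite ltey.
by rewrite lte_fin in gy_gt; rewrite -EFinD lte_fin; lra.
Qed.

Lemma frechet_subdiff_tilt {g} ys c t {x xs} :
  frechet_subdiff g x xs ->
  frechet_subdiff (tilt g ys c t) x (xs + (ys + t *: (x - c))).
Proof.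
case=> gx_fin g_sub; split=> [|e e_gt0]; first by rewrite tiltE fin_numD gx_fin.
have [d d_gt0 g_ge] := g_sub _ (divr_gt0 e_gt0 (ltr0n _ 2)).
have t1_gt0 : 0 < `|t| + 1 by rewrite ltr_wpDl.
exists (Num.min d (e / (`|t| + 1))) => [|y]; first by rewrite lt_min d_gt0 divr_gt0.
rewrite lt_min => /andP[N_gt0 /andP[Nd Nt]].
apply: le_trans (leeD2r _ (g_ge y _)); last by rewrite N_gt0.
rewrite tiltE -[g x](fineK gx_fin) -!EFinD lee_fin /= -/(tilt_quad ys c t y).
rewrite (tilt_quad_expand _ _ _ x y) dotvDl.
move: Nt N_gt0; rewrite ltr_pdivlMr //; set N := enorm (y - x) => Nt N_gt0.
have tN : `|t| * N <= e by nra.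
have := ler_norm (- t); rewrite normrN; nra.
Qed.

Lemma lim_subdiff_tilt {g} ys c t {x xs} :
  lim_subdiff g x xs ->
  lim_subdiff (tilt g ys c t) x (xs + (ys + t *: (x - c))).
Proof.
case=> [xk [xks [xk_cvg gxk_cvg xks_cvg xk_sub]]].
exists xk, (fun k => xks k + (ys + t *: (xk k - c))); split => //.
- apply: cvgeD => //; first exact: fin_num_adde_defl.
  by apply: cvg_EFin; [exact: nearW | exact: continuous_cvg (tilt_quad_continuous _ _ _ _) _].
- apply: cvgD => //; apply: cvgD; first exact: cvg_cst.
  by apply: cvgZ; [exact: cvg_cst | apply: cvgB => //; exact: cvg_cst].
- by move=> k; exact: frechet_subdiff_tilt.
Qed.

Lemma lim_subdiff_tiltE g ys c t x xs :
  lim_subdiff (tilt g ys c t) x xs <-> lim_subdiff g x (xs - (ys + t *: (x - c))).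
Proof.
split=> [/(lim_subdiff_tilt (- ys) c (- t))|/(lim_subdiff_tilt ys c t)].
  by rewrite tiltK scaleNr -opprD.
by rewrite subrK.
Qed.

End Tilt.

Section Convexity.
Context {R : realType} {n : nat}.
Local Notation V := 'rV[R]_n.
Implicit Types (U : set V) (g : V -> \bar R) (x z : V).

Lemma convex_ball (c : V) (r : R) : convex_setv (ball c r).
Proof.
move=> x y l; rewrite -!ball_normE /= => cx cy /andP[l_ge0 l_le1].
have -> : c - (l *: x + (1 - l) *: y) = l *: (c - x) + (1 - l) *: (c - y).
  by rewrite !scalerBr addrACA -scalerDl subrKC scale1r opprD.
apply: le_lt_trans (ler_normD _ _) _.
rewrite !normrZ (ger0_norm l_ge0) ger0_norm ?subr_ge0 //.
set a := `|c - x| in cx *; set b := `|c - y| in cy *.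
have a_le : a <= Num.max a b by rewrite le_max lexx.
have b_le : b <= Num.max a b by rewrite le_max lexx orbT.
have max_lt : Num.max a b < r by rewrite gt_max cx cy.
nra.
Qed.

Lemma convex_on_sub {U U' g} : U' `<=` U -> convex_on U g -> convex_on U' g.
Proof. by move=> sub g_cvx x y l Ux Uy; apply: g_cvx; apply: sub. Qed.

Lemma convex_on_add_affine {U g} (w : V) (k : R) :
  convex_on U g -> convex_on U (fun x => g x + (dotv w x + k)%:E)%E.
Proof.
move=> g_cvx x y l Ux Uy l01 /=.
rewrite !muleDr ?fin_num_adde_defl // -!EFinM addeACA -EFinD dotvDr !dotvZr.
rewrite (_ : _ + k = l * (dotv w x + k) + (1 - l) * (dotv w y + k)); last by ring.
exact: leeD2r (g_cvx x y l Ux Uy l01).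
Qed.

Lemma convex_on_tilt {U g} {s : R} (ys c : V) (t : R) :
  convex_on U (fun x => g x - (s / 2 * enorm x ^+ 2)%:E)%E ->
  convex_on U (fun x => tilt g ys c t x - ((s + t) / 2 * enorm x ^+ 2)%:E)%E.
Proof.
move=> /(convex_on_add_affine (ys - t *: c) (t / 2 * enorm c ^+ 2 - dotv ys c)).
congr convex_on; apply/funext => x; rewrite tiltE -!addeA -!EFinN -!EFinD.
congr (_ + _%:E)%E; rewrite /tilt_quad !enorm_sq !dotvBl !dotvBr !dotvZl (dotvC x c).
by field.
Qed.

Lemma frechet_subdiff_convex_le {U g x z gs} :
  convex_on U g -> ext_fun g -> U x -> U z -> frechet_subdiff g x gs ->
  (g x + (dotv gs (z - x))%:E <= g z)%E.
Proof.
move=> g_cvx g_ext Ux Uz [gx_fin g_sub].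
case gz: (g z) (g_ext z) => [r| |] // _; last exact: leey.
rewrite -(fineK gx_fin) -EFinD lee_fin.
have [zx|N_gt0] := eqVneq (enorm (z - x)) 0.
  by move: gz; rewrite (subr0_eq (enorm_eq0 _ zx)) subrr dotv0r addr0 => ->.
have {}N_gt0 : 0 < enorm (z - x) by rewrite lt_neqAle eq_sym N_gt0 enorm_ge0.
apply/ler_addgt0Pr => e e_gt0; set N := enorm (z - x) in N_gt0.
have [d d_gt0 g_ge] := g_sub _ (divr_gt0 e_gt0 N_gt0).
pose l := Num.min (1 / 2) (d / (2 * N)).
have dN_gt0 : 0 < d / (2 * N) by rewrite divr_gt0 ?mulr_gt0.
have l_gt0 : 0 < l by rewrite lt_min dN_gt0 andbT; lra.
have l_lt1 : l < 1 by rewrite gt_min; apply/orP; left; lra.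
have lN_lt : l * N < d.
  apply: le_lt_trans (_ : d / (2 * N) * N < d); first by rewrite ler_pM2r // ge_min lexx orbT.
  by rewrite invfM mulrA -mulrA mulVf ?gt_eqF // mulr1; lra.
have yx : l *: z + (1 - l) *: x - x = l *: (z - x).
  by apply/rowP => i; rewrite !mxE; ring.
(* Compare the Frechet lower bound with the convexity upper bound at x + l (z - x). *)
have := g_ge (l *: z + (1 - l) *: x).
rewrite yx enormZ (ger0_norm (ltW l_gt0)) dotvZr mulr_gt0 //= lN_lt => /(_ isT) g_ge_y.
have := le_trans g_ge_y (g_cvx z x l Uz Ux _); rewrite l_gt0 l_lt1 gz.
rewrite -(fineK gx_fin) -!EFinM -EFinD lee_fin => /(_ isT).
rewrite (_ : e / N * (l * N) = l * e); last by field; rewrite gt_eqF.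
by nra.
Qed.

Lemma frechet_subdiff_sconvex_le {U g} {s : R} {x z xs} :
  convex_on U (fun y => g y - (s / 2 * enorm y ^+ 2)%:E)%E -> ext_fun g ->
  U x -> U z -> frechet_subdiff g x xs ->
  (g x + (dotv xs (z - x) + s / 2 * enorm (z - x) ^+ 2)%:E <= g z)%E.
Proof.
move=> g_cvx g_ext Ux Uz g_sub.
have := frechet_subdiff_tilt 0 0 (- s) g_sub.
have -> : tilt g 0 0 (- s) = (fun y => g y - (s / 2 * enorm y ^+ 2)%:E)%E.
  by apply/funext => y; rewrite tiltE /tilt_quad dotv0l !subr0 add0r -EFinN !mulNr.
have g_ext' : ext_fun (fun y => g y - (s / 2 * enorm y ^+ 2)%:E)%E.
  by move=> y; move: (g_ext y); case: (g y).
move=> /(frechet_subdiff_convex_le g_cvx g_ext' Ux Uz); rewrite -addeA -EFinD.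
have [gx_fin _] := g_sub.
case: (g z) (g_ext z) => [r _|_ _|//]; last exact: leey.
rewrite -(fineK gx_fin) -!EFinD !lee_fin.
have := tilt_quad_expand 0 0 s x z; rewrite /tilt_quad !dotv0l !subr0 !add0r.
by rewrite dotvDl scaleNr dotvNl !dotvZl; lra.
Qed.

Lemma lim_subdiff_sconvex_le {U g} {s : R} {x z xs} :
  open U -> convex_on U (fun y => g y - (s / 2 * enorm y ^+ 2)%:E)%E -> ext_fun g ->
  U x -> U z -> lim_subdiff g x xs ->
  (g x + (dotv xs (z - x) + s / 2 * enorm (z - x) ^+ 2)%:E <= g z)%E.
Proof.
move=> U_open g_cvx g_ext Ux Uz [xk [xks [xk_cvg gxk_cvg xks_cvg xk_sub]]].
have zxk_cvg : (fun k => z - xk k) @ \oo --> z - x by apply: cvgB => //; exact: cvg_cst.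
pose c k := dotv (xks k) (z - xk k) + s / 2 * enorm (z - xk k) ^+ 2.
have c_cvg : c @ \oo --> dotv xs (z - x) + s / 2 * enorm (z - x) ^+ 2.
  rewrite /c enorm_sq; under eq_fun do rewrite enorm_sq.
  exact: (cvgD (dotv_cvg xks_cvg zxk_cvg) (cvgM (cvg_cst _) (dotv_cvg zxk_cvg zxk_cvg))).
have gc_cvg : (fun k => g (xk k) + (c k)%:E)%E @ \oo -->
    (g x + (dotv xs (z - x) + s / 2 * enorm (z - x) ^+ 2)%:E)%E.
  apply: cvgeD => //; first exact: fin_num_adde_defl.
  by apply: cvg_EFin; [exact: nearW | exact: c_cvg].
apply: (lee_cvg_to gc_cvg (cvg_cst (g z))).
near=> k; apply: (frechet_subdiff_sconvex_le g_cvx g_ext _ Uz (xk_sub k)).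
by near: k; apply: xk_cvg; exact: open_nbhs_nbhs.
Unshelve. all: by end_near.
Qed.

End Convexity.

Lemma nbhs_pair_ball {K : numDomainType} {T1 T2 : pseudoMetricType K}
    (a : T1) (b : T2) (P : set (T1 * T2)) :
  nbhs (a, b) P -> exists2 e : K, 0 < e & forall x y, ball a e x -> ball b e y -> P (x, y).
Proof. by move=> /nbhs_ballP[e e_gt0 Pe]; exists e => // x y xa yb; exact: Pe. Qed.

Section TiltCertificate.
Context {R : realType} {n : nat}.
Local Notation V := 'rV[R]_n.
Context {f fh : V -> \bar R} {s rho : R} {xb xbs : V} {U W : set V} (t : R) (ys : V).
Hypothesis cert : certifies f s xb xbs fh U W rho.

Lemma certifies_tilt_ball (fb rhoh e : R) :
  f xb = fb%:E -> fb < rhoh -> 0 < e ->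
  (forall x xs, ball xb e x -> ball (xbs + ys) e xs ->
     [/\ U x, W (xs - (ys + t *: (x - xb))), rhoh - rho < tilt_quad ys xb t x
       & fb - rhoh < dotv xs (xb - x) + (s + t) / 2 * dotv (xb - x) (xb - x)]) ->
  certifies (tilt f ys xb t) (s + t) xb (xbs + ys) (tilt fh ys xb t)
            (ball xb e) (ball (xbs + ys) e) rhoh.
Proof.
move=> f_xb fb_lt e_gt0 near_xb.
have [[_ [_ Uxb]] _ [fh_ext fh_lsc] _ [fh_cvx fh_le graphE fE]] := cert.
have ballU : ball xb e `<=` U.
  by move=> x /near_xb/(_ (ballxx _ e_gt0)) [].
have f_lt_rho x : ball xb e x -> (tilt f ys xb t x < rhoh%:E)%E -> (f x < rho%:E)%E.
  move=> /near_xb/(_ (ballxx _ e_gt0)) [_ _ q_gt _]; rewrite tilt_ltE => /lt_le_trans; apply.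
  by rewrite lee_fin; lra.
have psih_cvx := convex_on_sub ballU (convex_on_tilt ys xb t fh_cvx).
split.
- by split; [exact: ball_open | split; [exact: convex_ball | exact: ballxx]].
- by split; [exact: ball_open | split; [exact: convex_ball | exact: ballxx]].
- by split; [exact: ext_fun_tilt | exact: lsc_tilt].
- by rewrite tilt_center f_xb lte_fin.
split => //.
- by move=> x /ballU Ux; rewrite !tiltE leeD2r // fh_le.
- move=> x xs xb_x xs_near; have [Ux Wxs _ c_gt] := near_xb x xs xb_x xs_near.
  split=> [[/lim_subdiff_tiltE f_sub psi_lt]|psih_sub].
    by apply/lim_subdiff_tiltE/(graphE _ _ Ux Wxs); split=> //; exact: f_lt_rho.
  have /lim_subdiff_tiltE fh_sub := psih_sub.
  have [f_sub f_lt] := (graphE _ _ Ux Wxs).2 fh_sub.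
  split; first exact/lim_subdiff_tiltE.
  rewrite tiltE (fE _ _ Ux Wxs f_sub f_lt fh_sub) -tiltE.
  have := lim_subdiff_sconvex_le (ball_open _ _) psih_cvx (ext_fun_tilt ys xb t fh_ext)
    xb_x (ballxx _ e_gt0) psih_sub.
  rewrite tilt_center => /le_trans/(_ (fh_le _ Uxb)); rewrite f_xb enorm_sq => psih_le.
  case: (tilt fh ys xb t x) psih_le => [r| |] //= psih_le; last exact: ltNyr.
  by rewrite lte_fin; rewrite -EFinD lee_fin in psih_le; lra.
- move=> x xs xb_x xs_near /lim_subdiff_tiltE f_sub psi_lt /lim_subdiff_tiltE fh_sub.
  have [Ux Wxs _ _] := near_xb x xs xb_x xs_near.
  by rewrite !tiltE (fE _ _ Ux Wxs f_sub (f_lt_rho _ xb_x psi_lt) fh_sub).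
Qed.

Lemma tilt_certificate_near {fb rhoh : R} : fb < rhoh < rho ->
  \forall p \near (xb, xbs + ys),
    [/\ U p.1, W (p.2 - (ys + t *: (p.1 - xb))), rhoh - rho < tilt_quad ys xb t p.1
      & fb - rhoh < dotv p.2 (xb - p.1) + (s + t) / 2 * dotv (xb - p.1) (xb - p.1)].
Proof.
move=> /andP[fb_lt rhoh_lt]; set xs0 := xbs + ys.
have [[U_open [_ Uxb]] [W_open [_ Wxbs]] _ _ _] := cert.
have fst_cvg : (fun p : V * V => p.1) @ (xb, xs0) --> xb by exact: cvg_fst.
have snd_cvg : (fun p : V * V => p.2) @ (xb, xs0) --> xs0 by exact: cvg_snd.
have d_cvg : (fun p : V * V => xb - p.1) @ (xb, xs0) --> xb - xb.
  exact: (cvgB (cvg_cst _) fst_cvg).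
have shift_cvg : (fun p : V * V => p.2 - (ys + t *: (p.1 - xb))) @ (xb, xs0)
    --> xs0 - (ys + t *: (xb - xb)).
  exact: (cvgB snd_cvg (cvgD (cvg_cst _) (cvgZ (cvg_cst _) (cvgB fst_cvg (cvg_cst _))))).
have q_cvg : (fun p : V * V => tilt_quad ys xb t p.1) @ (xb, xs0) --> tilt_quad ys xb t xb.
  exact: (continuous_cvg _ (tilt_quad_continuous _ _ _ _) fst_cvg).
have c_cvg : (fun p : V * V => dotv p.2 (xb - p.1) + (s + t) / 2 * dotv (xb - p.1) (xb - p.1))
    @ (xb, xs0) --> dotv xs0 (xb - xb) + (s + t) / 2 * dotv (xb - xb) (xb - xb).
  exact: (cvgD (dotv_cvg snd_cvg d_cvg) (cvgM (cvg_cst _) (dotv_cvg d_cvg d_cvg))).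
rewrite subrr scaler0 addr0 addrK in shift_cvg.
rewrite tilt_quad_center in q_cvg.
rewrite subrr dotv0r dotv0l mulr0 addr0 in c_cvg.
near=> p; split; near: p.
- by apply: fst_cvg; apply: open_nbhs_nbhs.
- by apply: shift_cvg; apply: open_nbhs_nbhs.
- by apply: (cvgr_gt _ q_cvg); rewrite subr_lt0.
- by apply: (cvgr_gt _ c_cvg); rewrite subr_lt0.
Unshelve. all: by end_near.
Qed.

Lemma certifies_tilt : exists Uh Wh rhoh,
  certifies (tilt f ys xb t) (s + t) xb (xbs + ys) (tilt fh ys xb t) Uh Wh rhoh.
Proof.
have [[_ [_ Uxb]] _ [fh_ext _] f_lt [_ fh_le _ _]] := cert.
have [fb f_xb] : exists fb, f xb = fb%:E.
  move: (fh_le _ Uxb) (fh_ext xb) f_lt; case: (f xb) => [r _ _ _| |]; first by exists r.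
    by rewrite ltNge !leey.
  by rewrite leeNy_eq => /eqP ->.
have fb_lt : fb < rho by rewrite -lte_fin -f_xb.
pose rhoh := (fb + rho) / 2.
have rhoh_between : fb < rhoh < rho by apply/andP; split; rewrite /rhoh; lra.
have /nbhs_pair_ball[e e_gt0 near_xb] := tilt_certificate_near rhoh_between.
exists (ball xb e), (ball (xbs + ys) e), rhoh.
by apply: certifies_tilt_ball f_xb _ e_gt0 near_xb; case/andP: rhoh_between.
Qed.

End TiltCertificate.

Theorem lemma4p2 (R : realType) (n : nat) (s : R) (f : 'rV[R]_n -> \bar R)
    (xb xbs : 'rV[R]_n) :
  ext_fun f -> lsc f -> var_convex f s xb xbs ->
  (forall (t : R) (ys : 'rV[R]_n),
     var_convex (tilt f ys xb t) (s + t) xb (xbs + ys)) /\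
  (forall (fh : 'rV[R]_n -> \bar R) (U W : set 'rV[R]_n) (rho : R),
     certifies f s xb xbs fh U W rho ->
     forall (t : R) (ys : 'rV[R]_n),
       exists (Uh Wh : set 'rV[R]_n) (rhoh : R),
         certifies (tilt f ys xb t) (s + t) xb (xbs + ys)
                   (tilt fh ys xb t) Uh Wh rhoh).
Proof.
move=> _ _ [f_xb_lt f_sub [fh [U [W [rho cert]]]]].
split=> [t ys|fh' U' W' rho' cert' t ys]; last exact: (certifies_tilt t ys cert').
split.
- by rewrite tilt_center.
- by apply/lim_subdiff_tiltE; rewrite subrr scaler0 addr0 addrK.
- have [Uh [Wh [rhoh cert_tilt]]] := certifies_tilt t ys cert.
  by exists (tilt fh ys xb t), Uh, Wh, rhoh.
Qed.
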